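(* Let $G=(V,E)$ be a connected graph with $V=\{1,\ldots,n\}$, $\mathbf{w}\colon E\to\{1,\ldots,N\}$, and let $\mathcal{T}$ be an elimination tree of $G$. Let $v$ be an internal node of $\mathcal{T}$ with children $u_1,\ldots,u_o$, and let $J'\subseteq \mathtt{tail}^+[v]$. Then $$Q_{[v]}(J')=\prod_{i\in[o]}P_{(u_i)}(J').$$
   Context: An elimination tree of $G=(V,E)$ is a rooted tree on vertex set $V$ such that for every edge $\{u,v\}\in E$ one of $u,v$ is an ancestor of the other. For a node $v$: $\mathtt{tree}[v]$ is the set of nodes of the subtree rooted at $v$ (including $v$), $\mathtt{tree}(v)=\mathtt{tree}[v]\setminus\{v\}$; $\mathtt{tail}[v]$ is the set of ancestors of $v$ including $v$, $\mathtt{tail}(v)=\mathtt{tail}[v]\setminus\{v\}$. For $W\subseteq V$ let $W^+=\{u,u+n\mid u\in W\}\subseteq[2n]$, and write $\mathtt{tree}^+[v]=(\mathtt{tree}[v])^+$ etc. For $U\subseteq V$, $\delta[U]=\{e\in E\mid e\cap U\neq\emptyset\}$. For $\mathbf{w}$ and $F\subseteq E$, $\mathbf{w}(F)=\sum_{e\in F}\mathbf{w}(e)$. Define $\mathtt{tpl}(W)=\{(E_1,E_2,L)\mid E_1,E_2\subseteq\delta[W],\ L\subseteq W,\ E_1\cap E_2=\emptyset\}$; $\mathtt{mon}(E_1,E_2,L)=x^{|E_1|}y^{|E_2|}z^{|L|}\omega^{\mathbf{w}(E_1\cup E_2)}\in\mathbb{Z}[x,y,z,\omega]$; for $I\subseteq[2n]$,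 $\mathtt{dsj}(I)$ is the set of triples $(E_1,E_2,L)$ such that $\{s,t\}\cap I=\emptyset$ for all $\{s,t\}\in E_1$, $\{s+n,t+n\}\cap I=\emptyset$ for all $\{s,t\}\in E_2$, and $L^+\cap I=\emptyset$. Iverson bracket $[p]$ is $1$ if $p$ holds and $0$ otherwise. For a node $v$ and $J\subseteq\mathtt{tail}^+(v)$, $$P_{(v)}(J)=\sum_{(E_1,E_2,L)\in\mathtt{tpl}(\mathtt{tree}[v])}\mathtt{mon}(E_1,E_2,L)\sum_{K\subseteq\mathtt{tree}^+[v]}(-1)^{|K|}\,[(E_1,E_2,L)\in\mathtt{dsj}(J\cup K)],$$ and for $J'\subseteq\mathtt{tail}^+[v]$, $$Q_{[v]}(J')=\sum_{(E_1,E_2,L)\in\mathtt{tpl}(\mathtt{tree}(v))}\mathtt{mon}(E_1,E_2,L)\sum_{K'\subseteq\mathtt{tree}^+(v)}(-1)^{|K'|}\,[(E_1,E_2,L)\in\mathtt{dsj}(J'\cup K')].$$ *)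

(* with multinomials for Z[x,y,z,omega] = {mpoly int[4]}. *)
From HB Require Import structures.
From mathcomp Require Import all_boot all_order all_algebra.
From mathcomp Require Import mpoly.
Set Implicit Arguments. Unset Strict Implicit. Unset Printing Implicit Defensive.
Import GRing.Theory.
Local Open Scope ring_scope.

(* Vertices V = {1..n} are represented by 'I_n (i.e. 0..n-1);
   [2n] is represented by 'I_(n+n), where u : 'I_n stands for u (lshift)
   and u+n stands for rshift n u. *)

Section Defs.
Variable n : nat.
Notation V := 'I_n.
Notation V2 := 'I_(n + n).

Definition simple_graph (E : {set {set V}}) : Prop :=
  forall e, e \in E -> #|e| = 2%N.

Definition adj (E : {set {set V}}) : rel V := fun a b => [set a; b] \in E.

Definition graph_connected (E : {set {set V}}) : Prop :=
  forall a b : V, connect (adj E) a b.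

Definition rooted_tree (p : V -> V) (r : V) : Prop :=
  p r = r /\ forall u : V, connect (frel p) u r.

Definition anc (p : V -> V) (a u : V) : bool := connect (frel p) u a.

Definition elimination_tree (E : {set {set V}}) (p : V -> V) (r : V) : Prop :=
  rooted_tree p r /\
  forall a b : V, [set a; b] \in E -> anc p a b || anc p b a.

Definition children (p : V -> V) (v : V) : {set V} :=
  [set u | (p u == v) && (u != v)].

Definition treec (p : V -> V) (v : V) : {set V} := [set u | anc p v u].
Definition treeo (p : V -> V) (v : V) : {set V} := treec p v :\ v.
Definition tailc (p : V -> V) (v : V) : {set V} := [set u | anc p u v].
Definition tailo (p : V -> V) (v : V) : {set V} := tailc p v :\ v.

Definition lsh (W : {set V}) : {set V2} := [set lshift n u | u in W].
Definition rsh (W : {set V}) : {set V2} := [set rshift n u | u in W].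
Definition plus (W : {set V}) : {set V2} := lsh W :|: rsh W.

Definition delta (E : {set {set V}}) (U : {set V}) : {set {set V}} :=
  [set e in E | e :&: U != set0].

Definition wsum (w : {set V} -> nat) (F : {set {set V}}) : nat :=
  (\sum_(e in F) w e)%N.

Definition vx : 'I_4 := @Ordinal 4 0 isT.
Definition vy : 'I_4 := @Ordinal 4 1 isT.
Definition vz : 'I_4 := @Ordinal 4 2 isT.
Definition vw : 'I_4 := @Ordinal 4 3 isT.

Definition mon (w : {set V} -> nat) (E1 E2 : {set {set V}}) (L : {set V})
  : {mpoly int[4]} :=
  'X_vx ^+ #|E1| * 'X_vy ^+ #|E2| * 'X_vz ^+ #|L| * 'X_vw ^+ wsum w (E1 :|: E2).

Definition dsj (E1 E2 : {set {set V}}) (L : {set V}) (I : {set V2}) : bool :=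
  [&& [forall e in E1, [disjoint lsh e & I]],
      [forall e in E2, [disjoint rsh e & I]] &
      [disjoint plus L & I]].

Definition Fsum (E : {set {set V}}) (w : {set V} -> nat)
  (W : {set V}) (T : {set V2}) (J : {set V2}) : {mpoly int[4]} :=
  \sum_(E1 in powerset (delta E W))
   \sum_(E2 in powerset (delta E W) | [disjoint E1 & E2])
   \sum_(L in powerset W)
     mon w E1 E2 L *
     \sum_(K in powerset T) (-1) ^+ #|K| * (dsj E1 E2 L (J :|: K))%:R.

Definition Pv E w p v J := Fsum E w (treec p v) (plus (treec p v)) J.
Definition Qv E w p v J := Fsum E w (treeo p v) (plus (treeo p v)) J.

End Defs.

(* Summing over K first, inclusion-exclusion turns the inner alternating sum
   of P and Q into the indicator that the positions of [2n] blocked by a triple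
   (E1, E2, L) avoid J and cover W^+.  If W is the disjoint union of W1 and W2
   and no edge meets both parts, every triple for W splits uniquely into a
   triple for W1 and one for W2, and both the monomial and the indicator
   factor along this splitting; hence the sum for W is the product of the sums
   for W1 and W2.  In an elimination tree, tree(v) is the disjoint union of the
   subtrees tree[u_i] of the children of v, and since every edge joins an
   ancestor to a descendant, no edge joins two of these subtrees. *)

From HB Require Import structures.
From mathcomp Require Import all_boot all_order all_algebra.
From mathcomp Require Import mpoly.

Set Implicit Arguments. Unset Strict Implicit. Unset Printing Implicit Defensive.
Import GRing.Theory.
Local Open Scope ring_scope.

Section PowersetSums.
Variable T : finType.
Implicit Types A B C S J U : {set T}.

Lemma disjointsU A B C : [disjoint A :|: B & C] = [disjoint A & C] && [disjoint B & C].
Proof. by rewrite -!setI_eq0 setIUl setU_eq0. Qed.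

Lemma disjointsUr A B C : [disjoint A & B :|: C] = [disjoint A & B] && [disjoint A & C].
Proof. by rewrite -!setI_eq0 setIUr setU_eq0. Qed.

Lemma subsetU_disjointr A B C : [disjoint A & C] -> (A \subset B :|: C) = (A \subset B).
Proof. by move=> dAC; rewrite setUC -subDset (setDidPl dAC). Qed.

Lemma sum_powersetU (R : nmodType) A B (F : {set T} -> R) : [disjoint A & B] ->
  \sum_(K in powerset (A :|: B)) F K =
  \sum_(K1 in powerset A) \sum_(K2 in powerset B) F (K1 :|: K2).
Proof.
move=> dAB; rewrite pair_big /=.
rewrite (reindex_onto (fun K => K.1 :|: K.2) (fun K => (K :&: A, K :&: B))) /=; last first.
  by move=> K; rewrite powersetE -setIUr => /setIidPl.
apply: eq_bigl => -[K1 K2] /=; rewrite !powersetE.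
apply/andP/andP => [[_ /eqP[<- <-]]|[K1A K2B]]; first by rewrite !subsetIr.
split; first exact: setUSS.
have dK1B : [disjoint K1 & B] := disjointWl K1A dAB.
have dK2A : [disjoint K2 & A] by rewrite disjoint_sym in dAB; exact: disjointWl K2B dAB.
by rewrite !setIUl (setIidPl K1A) (setIidPl K2B) !disjoint_setI0 ?setU0 ?set0U.
Qed.

Lemma sum_powerset_sign (R : pzRingType) A :
  \sum_(K in powerset A) (-1) ^+ #|K| = (A == set0)%:R :> R.
Proof.
have [->|/set0Pn[x xA]] := eqVneq A set0.
  by rewrite powerset0 big_set1 cards0 expr0.
have x_notin : x \notin A :\ x by rewrite !inE eqxx.
rewrite -(setD1K xA) sum_powersetU ?disjoints1 // exchange_big big1 //=.
move=> K /[!powersetE] KA; rewrite powerset1 big_setU1 ?big_set1 /=; last first.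
  by rewrite !inE eq_sym -cards_eq0 cards1.
by rewrite set0U cardsU1 (contra (subsetP KA x)) // exprS mulN1r addrN.
Qed.

Lemma sum_powerset_sign_disjoint (R : pzRingType) S J U :
  \sum_(K in powerset U) (-1) ^+ #|K| * [disjoint S & J :|: K]%:R =
  [disjoint S & J]%:R * (U \subset S)%:R :> R.
Proof.
transitivity (\sum_(K in powerset U | [disjoint S & K])
                [disjoint S & J]%:R * (-1) ^+ #|K| : R).
  rewrite big_mkcondr; apply: eq_bigr => K _; rewrite disjointsUr.
  by case: [disjoint S & J]; case: [disjoint S & K]; rewrite ?mulr1 ?mul1r ?mulr0 ?mul0r.
rewrite -mulr_sumr (eq_bigl (mem (powerset (U :\: S)))) ?sum_powerset_sign ?setD_eq0 //.
by move=> K; rewrite /= !powersetE subsetD disjoint_sym.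
Qed.

End PowersetSums.

Section Doubling.
Variable n : nat.
Implicit Types A B W L : {set 'I_n}.

Lemma disjoint_lsh_rsh A B : [disjoint lsh A & rsh B].
Proof.
rewrite -setI_eq0; apply/eqP/setP => x; rewrite !inE.
by apply/andP => -[/imsetP[a _ ->] /imsetP[b _ /eqP]]; rewrite eq_lrshift.
Qed.

Lemma lsh_sub_plus A : lsh A \subset plus A.
Proof. exact: subsetUl. Qed.

Lemma rsh_sub_plus A : rsh A \subset plus A.
Proof. exact: subsetUr. Qed.

Lemma disjoint_plus A B : [disjoint plus A & plus B] = [disjoint A & B].
Proof.
rewrite /plus disjointsU !disjointsUr.
rewrite (imset_disjoint (@lshift_inj n n)) (imset_disjoint (@rshift_inj n n)).
have dBA := disjoint_lsh_rsh B A; rewrite disjoint_sym in dBA.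
by rewrite (disjoint_lsh_rsh A B) dBA andbT andbb.
Qed.

Lemma plusU A B : plus (A :|: B) = plus A :|: plus B.
Proof. by rewrite /plus /lsh /rsh !imsetU setUACA. Qed.

Lemma plus0 : plus (set0 : {set 'I_n}) = set0.
Proof. by rewrite /plus /lsh /rsh !imset0 setU0. Qed.

Definition footprint (E1 E2 : {set {set 'I_n}}) L : {set 'I_(n + n)} :=
  (\bigcup_(e in E1) lsh e) :|: (\bigcup_(e in E2) rsh e) :|: plus L.

Lemma dsj_footprint E1 E2 L I : dsj E1 E2 L I = [disjoint footprint E1 E2 L & I].
Proof.
have bigcupE (F : {set 'I_n} -> {set 'I_(n + n)}) (D : {set {set 'I_n}}) :
    [forall e in D, [disjoint F e & I]] = [disjoint \bigcup_(e in D) F e & I].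
  by rewrite disjoint_sym; apply/forall_inP/bigcup_disjointP => dD e /dD;
    rewrite disjoint_sym.
by rewrite /dsj /footprint [RHS]disjointsU [X in _ = X && _]disjointsU -!bigcupE andbA.
Qed.

Lemma footprint0 : footprint set0 set0 set0 = set0.
Proof. by rewrite /footprint !big_set0 plus0 !setU0. Qed.

Lemma footprintU E1a E1b E2a E2b La Lb :
  footprint (E1a :|: E1b) (E2a :|: E2b) (La :|: Lb) =
  footprint E1a E2a La :|: footprint E1b E2b Lb.
Proof.
by rewrite /footprint !bigcup_setU plusU [X in X :|: (plus La :|: _)]setUACA setUACA.
Qed.

Lemma footprint_disjoint_plus E1 E2 L W :
  {in E1 :|: E2, forall e : {set 'I_n}, [disjoint e & W]} -> [disjoint L & W] ->
  [disjoint footprint E1 E2 L & plus W].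
Proof.
move=> dE dL; rewrite /footprint disjointsU disjoint_plus dL andbT disjointsU.
apply/andP; split; rewrite disjoint_sym; apply/bigcup_disjointP => e eE;
  rewrite disjoint_sym.
- by apply: disjointWl (lsh_sub_plus e) _; rewrite disjoint_plus dE // inE eE.
- by apply: disjointWl (rsh_sub_plus e) _; rewrite disjoint_plus dE // inE eE orbT.
Qed.

End Doubling.

Section Factorization.
Variables (n : nat) (E : {set {set 'I_n}}) (w : {set 'I_n} -> nat).
Implicit Types W L : {set 'I_n}.

Lemma delta0 : delta E set0 = set0.
Proof. by apply/setP => e; rewrite !inE setI0 eqxx andbF. Qed.

Lemma deltaU W1 W2 : delta E (W1 :|: W2) = delta E W1 :|: delta E W2.
Proof. by apply/setP => e; rewrite !inE setIUr setU_eq0 negb_and andb_orr. Qed.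

Definition separated W1 W2 :=
  [disjoint W1 & W2] && [disjoint delta E W1 & delta E W2].

Lemma separated_sym W1 W2 : separated W1 W2 = separated W2 W1.
Proof. by rewrite /separated disjoint_sym [[disjoint delta E _ & _]]disjoint_sym. Qed.

Lemma separated0 W : separated W set0.
Proof. by rewrite /separated delta0 -!setI_eq0 !setI0 !eqxx. Qed.

Lemma separatedU W W1 W2 :
  separated W (W1 :|: W2) = separated W W1 && separated W W2.
Proof. by rewrite /separated deltaU !disjointsUr -!andbA; congr (_ && _); apply: andbCA. Qed.

Lemma footprint_separated W1 W2 E1 E2 L :
  separated W1 W2 -> E1 :|: E2 \subset delta E W1 -> L \subset W1 ->
  [disjoint plus W2 & footprint E1 E2 L].
Proof.
case/andP => dW dD sE sL; rewrite disjoint_sym.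
apply: footprint_disjoint_plus; last exact: disjointWl sL dW.
move=> e /(subsetP sE) eW1; have := disjointFr dD eW1.
by move: eW1; rewrite !inE => /andP[-> _] /negbFE; rewrite setI_eq0.
Qed.

Definition admissible (T J : {set 'I_(n + n)}) (E1 E2 : {set {set 'I_n}}) L :=
  [&& [disjoint E1 & E2], [disjoint footprint E1 E2 L & J]
    & T \subset footprint E1 E2 L].

Lemma Fsum_admissible W T J :
  Fsum E w W T J =
  \sum_(E1 in powerset (delta E W)) \sum_(E2 in powerset (delta E W))
    \sum_(L in powerset W) (admissible T J E1 E2 L)%:R * mon w E1 E2 L.
Proof.
apply: eq_bigr => E1 _; rewrite big_mkcondr; apply: eq_bigr => E2 _.
case: ifP => dE; last by rewrite big1 // => L _; rewrite /admissible dE mul0r.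
apply: eq_bigr => L _; under eq_bigr do rewrite dsj_footprint.
by rewrite sum_powerset_sign_disjoint /admissible dE /= -natrM mulnb mulrC.
Qed.

Lemma wsumU (F1 F2 : {set {set 'I_n}}) :
  [disjoint F1 & F2] -> wsum w (F1 :|: F2) = (wsum w F1 + wsum w F2)%N.
Proof. by move=> dF; rewrite /wsum -bigU //; apply: eq_bigl => e; rewrite inE. Qed.

Lemma mon_setU (E1a E1b E2a E2b : {set {set 'I_n}}) (La Lb : {set 'I_n}) :
  [disjoint E1a :|: E2a & E1b :|: E2b] -> [disjoint La & Lb] ->
  mon w (E1a :|: E1b) (E2a :|: E2b) (La :|: Lb) =
  mon w E1a E2a La * mon w E1b E2b Lb.
Proof.
move=> dE dL; rewrite /mon setUACA wsumU //.
have cardU (T : finType) (A B : {set T}) : [disjoint A & B] -> #|A :|: B| = (#|A| + #|B|)%N.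
  by move=> dAB; rewrite cardsU disjoint_setI0 // cards0 subn0.
rewrite !cardU //; last 2 first.
- exact: disjointWl (subsetUr _ _) (disjointWr (subsetUr _ _) dE).
- exact: disjointWl (subsetUl _ _) (disjointWr (subsetUl _ _) dE).
by rewrite !exprD [X in X * _ * _]mulrACA [X in X * _]mulrACA [LHS]mulrACA.
Qed.

Lemma admissible_setU (T1 T2 J : {set 'I_(n + n)}) (E1a E1b E2a E2b : {set {set 'I_n}})
    (La Lb : {set 'I_n}) :
  [disjoint E1a :|: E2a & E1b :|: E2b] ->
  [disjoint T1 & footprint E1b E2b Lb] -> [disjoint T2 & footprint E1a E2a La] ->
  admissible (T1 :|: T2) J (E1a :|: E1b) (E2a :|: E2b) (La :|: Lb) =
  admissible T1 J E1a E2a La && admissible T2 J E1b E2b Lb.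
Proof.
move=> dE dT1 dT2; rewrite /admissible.
have -> : [disjoint E1a :|: E1b & E2a :|: E2b] =
          [disjoint E1a & E2a] && [disjoint E1b & E2b].
  rewrite disjointsU !disjointsUr.
  rewrite (disjointWl (subsetUl _ _) (disjointWr (subsetUr _ _) dE)).
  by rewrite [[disjoint E1b & E2a]]disjoint_sym
    (disjointWl (subsetUr _ _) (disjointWr (subsetUl _ _) dE)) andbT.
rewrite footprintU disjointsU subUset (subsetU_disjointr _ dT1) setUC.
by rewrite (subsetU_disjointr _ dT2) [X in _ && X = _]andbACA [LHS]andbACA.
Qed.

Lemma Fsum_set0 J : Fsum E w set0 (plus set0) J = 1.
Proof.
rewrite Fsum_admissible delta0 !powerset0 !big_set1 /admissible footprint0 plus0.
rewrite -!setI_eq0 !set0I !eqxx sub0set /mon !cards0 setU0 /wsum big_set0.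
by rewrite !expr0 !mulr1.
Qed.

Lemma Fsum_setU W1 W2 J : separated W1 W2 ->
  Fsum E w (W1 :|: W2) (plus (W1 :|: W2)) J =
  Fsum E w W1 (plus W1) J * Fsum E w W2 (plus W2) J.
Proof.
move=> sep12; have sep21 : separated W2 W1 by rewrite separated_sym.
have /andP[dW dD] := sep12.
rewrite !Fsum_admissible deltaU plusU.
rewrite sum_powersetU // big_distrlr; apply: eq_bigr => E1a /[!powersetE] sE1a.
apply: eq_bigr => E1b /[!powersetE] sE1b.
rewrite sum_powersetU // big_distrlr; apply: eq_bigr => E2a /[!powersetE] sE2a.
apply: eq_bigr => E2b /[!powersetE] sE2b.
rewrite sum_powersetU // big_distrlr; apply: eq_bigr => La /[!powersetE] sLa.
apply: eq_bigr => Lb /[!powersetE] sLb.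
have sEa : E1a :|: E2a \subset delta E W1 by rewrite subUset sE1a.
have sEb : E1b :|: E2b \subset delta E W2 by rewrite subUset sE1b.
have dE := disjointW sEa sEb dD.
rewrite (admissible_setU _ dE (footprint_separated sep21 sEb sLb)
          (footprint_separated sep12 sEa sLa)).
by rewrite (mon_setU dE (disjointW sLa sLb dW)) -mulnb natrM mulrACA.
Qed.

Lemma Fsum_bigcup (I : finType) (C : {set I}) (F : I -> {set 'I_n}) J :
  {in C &, forall i j, i != j -> separated (F i) (F j)} ->
  Fsum E w (\bigcup_(i in C) F i) (plus (\bigcup_(i in C) F i)) J =
  \prod_(i in C) Fsum E w (F i) (plus (F i)) J.
Proof.
move=> sepC; rewrite -!big_enum /=.
have: {subset enum C <= C} by move=> i; rewrite mem_enum.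
elim: (enum C) (enum_uniq C) => [|i s IH] /=; first by rewrite !big_nil Fsum_set0.
case/andP => i_s s_uniq sC; rewrite !big_cons Fsum_setU ?IH //.
  by move=> j js; apply: sC; rewrite inE js orbT.
rewrite big_seq; apply: (big_ind (separated (F i))) => [|A B|j js]; first exact: separated0.
  by rewrite separatedU => ->.
apply: sepC; [exact: sC (mem_head i s) | by apply: sC; rewrite inE js orbT |].
by apply: contraNneq i_s => ->.
Qed.

End Factorization.

Section EliminationTree.
Variables (n : nat) (p : 'I_n -> 'I_n) (r : 'I_n).

Lemma ancP a u : reflect (exists k, iter k p u = a) (anc p a u).
Proof.
apply: (iffP idP) => [au | [k <-]]; last exact: fconnect_iter.
by exists (findex p u a); apply: iter_findex.
Qed.

Lemma anc_trans a b c : anc p a b -> anc p b c -> anc p a c.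
Proof. by move=> ab bc; apply: connect_trans bc ab. Qed.

Lemma anc_parent u : anc p (p u) u.
Proof. exact: (fconnect_iter p 1). Qed.

Lemma anc_neq_parent a u : anc p a u -> a != u -> anc p a (p u).
Proof.
case/ancP => -[|k] <- au; first by rewrite eqxx in au.
by apply/ancP; exists k; rewrite -iterSr.
Qed.

Lemma anc_total a b u : anc p a u -> anc p b u -> anc p a b || anc p b a.
Proof.
move=> /ancP[i <-] /ancP[j <-]; have [ij|ji] := leqP i j.
  by apply/orP; right; apply/ancP; exists (j - i)%N; rewrite -iterD subnK.
by apply/orP; left; apply/ancP; exists (i - j)%N; rewrite -iterD subnK // ltnW.
Qed.

Hypothesis p_tree : rooted_tree p r.

(* A vertex lying on a cycle of p can reach the fixed point r only if it is r. *)
Lemma anc_antisym a b : anc p a b -> anc p b a -> a = b.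
Proof.
case: p_tree => pr reach_r; move=> /ancP[i <-] /ancP[j].
rewrite -iterD => b_periodic.
have [i0|i_gt0] := posnP i; first by rewrite i0.
have iter_r k : iter k p r = r by elim: k => //= k ->.
have b_iter k : iter (k * (j + i)) p b = b.
  by elim: k => // k IH; rewrite mulSn iterD IH b_periodic.
have [k bk] := ancP _ _ (reach_r b).
have kle : (k <= k * (j + i))%N by rewrite leq_pmulr // addn_gt0 i_gt0 orbT.
have br : b = r by rewrite -(b_iter k) -(subnK kle) iterD bk iter_r.
by rewrite br iter_r.
Qed.

Lemma anc_child v u : anc p v u -> u != v ->
  exists2 c, c \in children p v & anc p c u.
Proof.
case/ancP => k; elim: k u => [|k IH] u; first by move=> /= -> /[!eqxx].
move=> ukv uv; have [puv|puv] := eqVneq (p u) v.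
  by exists u; [rewrite inE puv eqxx | exact: connect0].
rewrite iterSr in ukv; have [c cv cpu] := IH (p u) ukv puv.
by exists c => //; apply: anc_trans cpu (anc_parent u).
Qed.

Lemma treeo_bigcup v : treeo p v = \bigcup_(c in children p v) treec p c.
Proof.
apply/setP => u; rewrite !inE; apply/andP/bigcupP => [[uv vu] | [c]].
  by have [c cv cu] := anc_child vu uv; exists c; rewrite // inE.
rewrite !inE => /andP[/eqP pc cv] cu; have vc : anc p v c by rewrite -pc anc_parent.
split; last exact: anc_trans vc cu.
apply/eqP => uv; rewrite uv in cu.
by move: cv; rewrite (anc_antisym cu vc) eqxx.
Qed.

Lemma anc_children_eq v c1 c2 : c1 \in children p v -> c2 \in children p v ->
  anc p c1 c2 -> c1 = c2.
Proof.
rewrite !inE => /andP[/eqP pc1 c1v] /andP[/eqP pc2 _] c12.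
apply/eqP; apply: contraNT c1v => c12_neq.
have c1_anc_v : anc p c1 v by rewrite -pc2; exact: anc_neq_parent.
have v_anc_c1 : anc p v c1 by rewrite -pc1 anc_parent.
by rewrite (anc_antisym c1_anc_v v_anc_c1).
Qed.

Lemma children_common_desc_eq v c1 c2 x : c1 \in children p v -> c2 \in children p v ->
  anc p c1 x -> anc p c2 x -> c1 = c2.
Proof.
move=> c1v c2v c1x c2x; case/orP: (anc_total c1x c2x) => [c12 | c21].
  exact: anc_children_eq c1v c2v c12.
exact/esym/(anc_children_eq c2v c1v c21).
Qed.

Lemma separated_treec_children E v c1 c2 : simple_graph E ->
  (forall a b, [set a; b] \in E -> anc p a b || anc p b a) ->
  c1 \in children p v -> c2 \in children p v -> c1 != c2 ->
  separated E (treec p c1) (treec p c2).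
Proof.
move=> E_simple E_elim c1v c2v c12.
have common x : anc p c1 x -> anc p c2 x -> False.
  by move=> c1x c2x; rewrite (children_common_desc_eq c1v c2v c1x c2x) eqxx in c12.
have dT : [disjoint treec p c1 & treec p c2].
  rewrite -setI_eq0; apply/eqP/setP => x; rewrite !inE.
  by apply/negbTE/negP => /andP[] /common.
rewrite /separated dT -setI_eq0; apply/eqP/setP => e; rewrite !inE.
apply/negbTE/negP => /andP[/andP[eE /set0Pn[a /setIP[ae]]]].
rewrite inE => c1a /andP[_ /set0Pn[b /setIP[be]]]; rewrite inE => c2b.
have ab : a != b by apply/eqP => ab; apply: (common b) c2b; rewrite -ab.
have e_ab : e = [set a; b].
  by apply/eqP; rewrite eq_sym eqEcard subUset !sub1set ae be cards2 ab E_simple.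
rewrite e_ab in eE; case/orP: (E_elim a b eE) => [a_b | b_a].
  exact: common (anc_trans c1a a_b) c2b.
exact: common c1a (anc_trans c2b b_a).
Qed.

End EliminationTree.

Unset Implicit Arguments.

Theorem lemma5 (n N : nat) (E : {set {set 'I_n}}) (w : {set 'I_n} -> nat)
  (p : 'I_n -> 'I_n) (r : 'I_n) (v : 'I_n) (J' : {set 'I_(n + n)}) :
  simple_graph E ->
  graph_connected E ->
  (forall e, e \in E -> (1 <= w e <= N)%N) ->
  elimination_tree E p r ->
  children p v != set0 ->
  J' \subset plus (tailc p v) ->
  Qv E w p v J' = \prod_(u in children p v) Pv E w p u J'.
Proof.
move=> E_simple _ _ [p_tree E_elim] _ _.
rewrite /Qv /Pv (treeo_bigcup p_tree) Fsum_bigcup // => c1 c2 c1v c2v.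
exact: (separated_treec_children p_tree E_simple E_elim c1v c2v).
Qed.
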